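(* Let $N\ge 1$ users and a server run the LightSecAgg protocol described in the context, with integer parameters $T\ge 0$ (privacy guarantee) and $D\ge 0$ (dropout-resiliency guarantee) satisfying $T+D<N$, and with the design parameter $U$ being any integer with $T<U\le N-D$. Then LightSecAgg simultaneously achieves (1) privacy against any set of up to $T$ colluding users (who may also collude with the server), and (2) dropout-resiliency against any set of up to $D$ dropped users, in the sense defined in the context.
   Context: Setting: there are $N$ users, indexed by $[N]=\{1,\dots,N\}$, and a server. User $i$ holds a local model $\mathbf{x}_i\in\mathbb{F}_q^d$ for a finite field $\mathbb{F}_q$; the $\mathbf{x}_i$ are independent of all randomness generated by the protocol. Users communicate with each other through private, authenticated channels (the server does not see user-to-user messages). Assume $U-T$ divides $d$. A matrix $W\in\mathbb{F}_q^{U\times N}$ is MDS if every $U\times U$ submatrix is invertible; it is $T$-private MDS if in addition the submatrix consisting of its rows $U-T+1,\dots,U$ is MDS (every $T\times T$ submatrix of it is invertible). Such matrices exist for all $U,N,T$ (for $q$ large enough). Let $W_j$ denote the $j$-th column of a fixed $T$-private MDS matrix $W$. LightSecAgg protocol with parameters $T,D,U$ ($N-D\ge U>T\ge0$): (i) Offline encoding and sharing of masks: each user $i$ independently picks $\mathbf{z}_i$ uniformly at random from $\mathbb{F}_q^d$, partitions it into $U-T$ sub-masks $[\mathbf{z}_i]_1,\dots,[\mathbf{z}_i]_{U-T}\in\mathbb{F}_q^{d/(U-T)}$, picks $[\mathbf{n}_i]_{U-T+1},\dots,[\mathbf{n}_i]_U$ independently and uniformly at random from $\mathbb{F}_q^{d/(U-T)}$,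 and computes for each $j\in[N]$ the encoded mask $[\tilde{\mathbf{z}}_i]_j=([\mathbf{z}_i]_1,\dots,[\mathbf{z}_i]_{U-T},[\mathbf{n}_i]_{U-T+1},\dots,[\mathbf{n}_i]_U)\cdot W_j$ (each coordinate of the vectors combined linearly with the entries of $W_j$). User $i$ sends $[\tilde{\mathbf{z}}_i]_j$ to user $j$ for each $j\ne i$. (ii) Masking and uploading: each user $i$ sends $\tilde{\mathbf{x}}_i=\mathbf{x}_i+\mathbf{z}_i$ to the server. The server identifies the set $\mathcal{U}_1\subseteq[N]$ of users whose masked models it received (surviving users). (iii) One-shot aggregate-model recovery: each surviving user $j\in\mathcal{U}_1$ sends $\sum_{i\in\mathcal{U}_1}[\tilde{\mathbf{z}}_i]_j$ to the server; after receiving any $U$ of these messages, the server decodes (using $W$) $\sum_{i\in\mathcal{U}_1}[\mathbf{z}_i]_k$ for $k\in[U-T]$, concatenates them into $\sum_{i\in\mathcal{U}_1}\mathbf{z}_i$, and outputs $\sum_{i\in\mathcal{U}_1}\tilde{\mathbf{x}}_i-\sum_{i\in\mathcal{U}_1}\mathbf{z}_i$. Privacy guarantee $T$: for every set $\mathcal{T}\subseteq[N]$ with $|\mathcal{T}|\le T$, $I\big(\{\mathbf{x}_i\}_{i\in[N]};\mathbf{Y}\,\big|\,\sum_{i\in\mathcal{U}_1}\mathbf{x}_i,\mathbf{Z}_{\mathcal{T}}\big)=0$, where $\mathbf{Y}$ is the collection of all messages received by the server (in the worst case where users deemed dropped are merely delayed, so the server receives all masked models), and $\mathbf{Z}_{\mathcal{T}}$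 is the collection of all information held by the users in $\mathcal{T}$ (their models, masks and received encoded masks). Dropout-resiliency guarantee $D$: if at most $D$ users drop at any point during execution, the server correctly recovers $\sum_{i\in\mathcal{U}_1}\mathbf{x}_i$, the sum of the surviving users' models. *)

From HB Require Import structures.
From mathcomp Require Import all_boot all_order all_algebra.
From mathcomp Require Import reals exp.
Set Implicit Arguments. Unset Strict Implicit. Unset Printing Implicit Defensive.
Import Order.TTheory GRing.Theory Num.Theory.
Local Open Scope ring_scope.

Section Info.
Variables (R : realType) (Om : finType) (p : Om -> R).

Definition Pr (E : pred Om) : R := \sum_(w | E w) p w.

(* Conditional mutual information
     I(X;Y|Z) = E[ log ( p(x,y,z) p(z) / (p(x,z) p(y,z)) ) ]
   (natural logarithm; sample points of probability 0 contribute 0). *)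
Definition cond_mutual_info (A B C : eqType)
  (X : Om -> A) (Y : Om -> B) (Z : Om -> C) : R :=
  \sum_(w : Om) p w *
    ln ( (Pr (fun v => [&& X v == X w, Y v == Y w & Z v == Z w])
          * Pr (fun v => Z v == Z w))
       / (Pr (fun v => (X v == X w) && (Z v == Z w))
          * Pr (fun v => (Y v == Y w) && (Z v == Z w))) ).
End Info.

(* the k-th row (k a natural number) of a matrix, 0 if k is out of range *)
Definition nrow (F : nzRingType) (r c : nat) (A : 'M[F]_(r, c)) (k : nat) : 'rV[F]_c :=
  \sum_(i < r | val i == k) row i A.

Definition MDS (F : fieldType) (r n : nat) (A : 'M[F]_(r, n)) : Prop :=
  forall f : 'I_r -> 'I_n, injective f -> colsub f A \in unitmx.

(* the last T rows (rows U-T+1..U in 1-based numbering) of W *)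
Definition bottom_rows (F : fieldType) (U N : nat) (T : nat) (W : 'M[F]_(U, N))
  : 'M[F]_(T, N) := \matrix_(a < T) nrow W (U - T + a).

Definition T_private_MDS (F : fieldType) (U N : nat) (T : nat) (W : 'M[F]_(U, N))
  : Prop := MDS W /\ MDS (bottom_rows T W).

(*   d = (U-T) * m ; a vector z in F^d is partitioned into U-T         *)
(*   sub-masks of length m: [z]_k = row k (vec_mx z), k < U-T.         *)
Section LightSecAgg.
Variables (F : finFieldType) (U N T m : nat) (W : 'M[F]_(U, N)).

Local Notation vec := 'rV[F]_((U - T) * m).
Definition models_t := {ffun 'I_N -> vec}.
(* private randomness of user i: mask z_i and noise [n_i]_{U-T+1..U}
   (the a-th row of the noise matrix is [n_i]_{U-T+1+a}) *)
Definition rnd_t := {ffun 'I_N -> (vec * 'M[F]_(T, m))%type}.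
Definition omega_t := (models_t * rnd_t)%type.

(* k-th entry (k < U) of ([z]_1,...,[z]_{U-T},[n]_{U-T+1},...,[n]_U) *)
Definition coef (zn : vec * 'M[F]_(T, m)) (k : nat) : 'rV[F]_m :=
  if (k < U - T)%N then nrow (vec_mx zn.1) k else nrow zn.2 (k - (U - T)).

(* encoded mask [z~_i]_j sent from user i to user j *)
Definition enc_mask (r : rnd_t) (i j : 'I_N) : 'rV[F]_m :=
  \sum_(k < U) W k j *: coef (r i) k.

Definition masked (x : models_t) (r : rnd_t) (i : 'I_N) : vec := x i + (r i).1.

(* message of surviving user j in phase (iii) *)
Definition agg_share (U1 : {set 'I_N}) (r : rnd_t) (j : 'I_N) : 'rV[F]_m :=
  \sum_(i in U1) enc_mask r i j.

(* server decoding from the messages of a set S of (U) users: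
   solve the linear system given by the columns of W indexed by S for
   the aggregated coefficient vector, keep its first U-T entries,
   concatenate them and subtract from the sum of masked models. *)
Definition server_output (U1 S : {set 'I_N}) (xt : 'I_N -> vec)
    (resp : 'I_N -> 'rV[F]_m) : vec :=
  match [pick A : 'M[F]_(U, m) |
           [forall j in S, \sum_(k < U) W k j *: row k A == resp j]] with
  | Some A => \sum_(i in U1) xt i
              - mxvec (\matrix_(k < U - T) row (widen_ord (leq_subr T U) k) A)
  | None => 0
  end.

Definition all_models (w : omega_t) : models_t := w.1.

Definition sum_models (U1 : {set 'I_N}) (w : omega_t) : vec := \sum_(i in U1) w.1 i.

(* everything received by the server (all masked models, and the phase
   (iii) messages of the users in U1) *)
Definition server_view (U1 : {set 'I_N}) (w : omega_t) :=
  ([ffun i => masked w.1 w.2 i],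
   [ffun j => if j \in U1 then Some (agg_share U1 w.2 j) else None]
     : {ffun 'I_N -> option 'rV[F]_m}).

(* everything held by the colluding users in Tc: model, mask, noise and
   all received encoded masks *)
Definition colluders_view (Tc : {set 'I_N}) (w : omega_t) :
  {ffun 'I_N -> option (vec * (vec * 'M[F]_(T, m)) * {ffun 'I_N -> 'rV[F]_m})} :=
  [ffun i => if i \in Tc then Some (w.1 i, w.2 i, [ffun j => enc_mask w.2 j i])
             else None].

(* joint law: models with arbitrary law Px, independent of the uniform
   protocol randomness *)
Definition lsa_prob (R : realType) (Px : models_t -> R) (w : omega_t) : R :=
  Px w.1 / #|{: rnd_t}|%:R.

Definition privacy_guarantee (Tp : nat) : Prop :=
  forall (R : realType) (Px : {ffun models_t -> R}),
    (forall x, 0 <= Px x) -> \sum_x Px x = 1 ->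
    forall Tc U1 : {set 'I_N}, (#|Tc| <= Tp)%N ->
      cond_mutual_info (lsa_prob Px) all_models (server_view U1)
        (fun w => (sum_models U1 w, colluders_view Tc w)) = 0.

(* U1: users whose masked model reached the server; U2 (subset of U1):
   users whose phase-(iii) message reached the server. At most D users
   drop in total. *)
Definition dropout_guarantee (D : nat) : Prop :=
  forall (x : models_t) (r : rnd_t) (U1 U2 : {set 'I_N}),
    (N - D <= #|U1|)%N -> U2 \subset U1 -> (N - D <= #|U2|)%N ->
    (U <= #|U2|)%N /\
    forall S : {set 'I_N}, S \subset U2 -> #|S| = U :> nat ->
      server_output U1 S (masked x r) (agg_share U1 r) = \sum_(i in U1) x i.

End LightSecAgg.

(* The conditional mutual information vanishes as soon as, for any
   two sample points with the same conditioning value, the protocol randomness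
   for the first model vector can be matched injectively with randomness for
   the second one producing the same server view and conditioning value.
   Given models x, x' that agree on the colluders and have the same sum over
   U1, put d = x' - x: subtract d_i from every mask and add to every noise the
   solution K d_i of the T x T system making the colluders' encoded noise
   equal to their encoded mask change; it is solvable because the last T rows
   of W are MDS.  The colluders then see nothing change, all other shares move
   by a fixed linear image of d_i, and these moves cancel in the aggregate
   since the d_i sum to 0 over U1.  The aggregate shares are the columns of W^T applied to
   the sum of the users' coefficient vectors, and any U columns of the MDS
   matrix W are independent, so the server's linear system has exactly this
   solution, whose first U - T rows are the summed masks. *)

From HB Require Import structures.
From mathcomp Require Import all_boot all_order all_algebra.
From mathcomp Require Import reals exp.
From mathcomp Require Import zify.
Set Implicit Arguments. Unset Strict Implicit. Unset Printing Implicit Defensive.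
Import Order.TTheory GRing.Theory Num.Theory.
Local Open Scope ring_scope.

Lemma cond_mutual_info_eq0 (R : realType) (Om : finType) (p : Om -> R)
    (A B C : eqType) (X : Om -> A) (Y : Om -> B) (Z : Om -> C) :
  (forall w, Pr p (fun v => [&& X v == X w, Y v == Y w & Z v == Z w])
             * Pr p (fun v => Z v == Z w)
           = Pr p (fun v => (X v == X w) && (Z v == Z w))
             * Pr p (fun v => (Y v == Y w) && (Z v == Z w))) ->
  cond_mutual_info p X Y Z = 0.
Proof.
move=> indep; apply: big1 => w _; rewrite indep.
set a := (X in X / X); have [->|a_neq0] := eqVneq a 0.
  by rewrite mul0r ln0 ?mulr0.
by rewrite divff // ln1 mulr0.
Qed.

Lemma card_inj_preim (T : finType) (f : T -> T) (a b : pred T) :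
  injective f -> (forall s, a s = b (f s)) -> #|a| = #|b|.
Proof.
move=> injf ab; rewrite -[RHS]cardsE -(card_preimset _ injf) -[LHS]cardsE.
by apply: eq_card => s; rewrite !inE; apply: ab.
Qed.

Section ProductSpace.
Variables (R : realType) (X Rn : finType) (P : X -> R) (K : R).
Let p (w : X * Rn) := P w.1 * K.

Lemma Pr_pair (E : pred (X * Rn)) :
  Pr p E = \sum_x P x * K * #|[pred r | E (x, r)]|%:R.
Proof.
rewrite /Pr (eq_bigl (fun w => xpredT w.1 && E (w.1, w.2))); last by case.
rewrite -(pair_big_dep xpredT (fun x r => E (x, r)) (fun x _ => P x * K)) /=.
by apply: eq_bigr => x _; rewrite (sumr_const [pred r | E (x, r)]) mulr_natr.
Qed.

Lemma Pr_pinned (x0 : X) (E : pred (X * Rn)) :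
  Pr p (fun w => (w.1 == x0) && E w) = P x0 * K * #|[pred r | E (x0, r)]|%:R.
Proof.
rewrite Pr_pair (bigD1 x0) //= big1 ?addr0 => [|x /negbTE x_neq].
  by congr (_ * _%:R); apply: eq_card => r; rewrite !inE /= eqxx.
by rewrite eq_card0 ?mulr0 // => r; rewrite !inE /= x_neq.
Qed.

Lemma cond_mutual_info_fst_eq0 (B C : eqType) (Y : X * Rn -> B) (Z : X * Rn -> C) :
  (forall x x' r r', Z (x, r) = Z (x', r') ->
     exists2 phi : Rn -> Rn, injective phi &
       forall s, Y (x, s) = Y (x', phi s) /\ Z (x, s) = Z (x', phi s)) ->
  cond_mutual_info p fst Y Z = 0.
Proof.
move=> sim; apply: cond_mutual_info_eq0 => -[x0 r0] /=.
set y0 := Y (x0, r0); set z0 := Z (x0, r0).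
pose nZ x := #|[pred r | Z (x, r) == z0]|%:R : R.
pose nYZ x := #|[pred r | (Y (x, r) == y0) && (Z (x, r) == z0)]|%:R : R.
have fibers x : nZ x * nYZ x0 = nYZ x * nZ x0.
  case: (pickP [pred r | Z (x, r) == z0]) => [r1 /eqP Zr1 | noZ].
    have [phi injphi simphi] := sim _ _ _ _ Zr1.
    have -> : nZ x = nZ x0.
      by congr _%:R; apply: card_inj_preim injphi _ => s /=; rewrite (simphi s).2.
    have -> : nYZ x = nYZ x0.
      by congr _%:R; apply: card_inj_preim injphi _ => s /=; case: (simphi s) => -> ->.
    exact: mulrC.
  have {}noZ r : (Z (x, r) == z0) = false := noZ r.
  have nZ0 : nZ x = 0 by rewrite /nZ eq_card0 // => r; rewrite !inE /= noZ.
  have nYZ0 : nYZ x = 0 by rewrite /nYZ eq_card0 // => r; rewrite !inE /= noZ andbF.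
  by rewrite nZ0 nYZ0 !mul0r.
rewrite (Pr_pinned x0 (fun v => (Y v == y0) && (Z v == z0))).
rewrite (Pr_pinned x0 (fun v => Z v == z0)).
rewrite !Pr_pair -/(nZ x0) -/(nYZ x0) !mulr_sumr; apply: eq_bigr => x _.
rewrite -/(nZ x) -/(nYZ x) -!mulrA; congr (_ * (_ * _)).
by rewrite mulrC [RHS]mulrC -!mulrA fibers.
Qed.
End ProductSpace.

Lemma exists_supset_card (I : finType) (A : {set I}) k :
  (#|A| <= k <= #|I|)%N -> exists2 S : {set I}, A \subset S & #|S| = k.
Proof.
case/andP => leAk lekI.
have : (k - #|A| <= #|~: A|)%N by move: (cardsC A); lia.
case/card_geqP => s [uniq_s size_s sub_s].
exists (A :|: [set x in s]); first exact: subsetUl.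
have disj : A :&: [set x in s] = set0.
  by apply/setP => x; rewrite !inE; apply/andP => -[xA /sub_s]; rewrite inE xA.
by rewrite cardsU disj cards0 subn0 cardsE (card_uniqP uniq_s) size_s; lia.
Qed.

Lemma enum_ord_set (I : finType) (S : {set I}) k :
  #|S| = k -> exists2 f : 'I_k -> I, injective f & S =i codom f.
Proof.
move=> cardS; exists (fun b => enum_val (cast_ord (esym cardS) b)).
  by move=> b1 b2 /enum_val_inj /cast_ord_inj.
move=> i; apply/idP/codomP => [iS | [b ->]]; last exact: enum_valP.
by exists (cast_ord cardS (enum_rank_in iS i)); rewrite cast_ordK enum_rankK_in.
Qed.

Lemma row_trmx_mul (R : pzRingType) k n p (A : 'M[R]_(k, n)) (C : 'M[R]_(k, p)) j :
  row j (A^T *m C) = \sum_i A i j *: row i C.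
Proof. by rewrite row_mul mulmx_sum_row; apply: eq_bigr => i _; rewrite !mxE. Qed.

Lemma nrow_ord (R : nzRingType) r c (A : 'M[R]_(r, c)) (i : 'I_r) : nrow A i = row i A.
Proof. by rewrite /nrow (big_pred1 i) // => j /=; rewrite -val_eqE. Qed.

Section LightSecAggProofs.
Variables (F : finFieldType) (U N T m : nat) (W : 'M[F]_(U, N)).
Local Notation vec := 'rV[F]_((U - T) * m).
Local Notation rnd := (rnd_t F U N T m).
Local Notation B := (bottom_rows T W).

Definition top_rows : 'M[F]_(U - T, N) :=
  \matrix_(k < U - T) row (widen_ord (leq_subr T U) k) W.

Lemma enc_maskE (r : rnd) i j : (T <= U)%N ->
  enc_mask W r i j = row j (top_rows^T *m vec_mx (r i).1 + B^T *m (r i).2).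
Proof.
move=> leTU; rewrite raddfD /= !row_trmx_mul /enc_mask.
pose G k := nrow W k 0 j *: coef (r i) k.
rewrite (eq_bigr (G \o val)) => [|k _]; last by rewrite /G /= nrow_ord mxE.
rewrite -(big_mkord xpredT G) (big_cat_nat (leq0n (U - T)) (leq_subr T U)) /=.
rewrite (big_addn 0 U (U - T)) subKn // !big_mkord; congr (_ + _); apply: eq_bigr => k _.
  by rewrite /G /coef ltn_ord !mxE nrow_ord (nrow_ord W (widen_ord (leq_subr T U) k)) mxE.
by rewrite /G /coef ltnNge leq_addl /= addnK !mxE addnC nrow_ord.
Qed.

Section Privacy.
Hypothesis leTU : (T <= U)%N.
Variable f : 'I_T -> 'I_N.
Hypothesis f_unit : colsub f B \in unitmx.

Definition noise_of_mask : 'M[F]_(T, U - T) := invmx (colsub f B)^T *m rowsub f top_rows^T.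

Definition share_shift : 'M[F]_(N, U - T) := B^T *m noise_of_mask - top_rows^T.

Lemma row_share_shift_codom i (v : 'M[F]_(U - T, m)) :
  i \in codom f -> row i (share_shift *m v) = 0.
Proof.
case/codomP => b ->; rewrite -row_rowsub -mul_rowsub_mx raddfB /=.
by rewrite -mul_rowsub_mx -[rowsub f B^T]trmx_mxsub mulKVmx ?unitmx_tr // subrr mul0mx row0.
Qed.

Definition shift_rnd (d : 'I_N -> vec) (r : rnd) : rnd :=
  [ffun i => ((r i).1 - d i, (r i).2 + noise_of_mask *m vec_mx (d i))].

Lemma shift_rnd_inj d : injective (shift_rnd d).
Proof.
move=> r1 r2 /ffunP eq_r; apply/ffunP => i; move: (eq_r i); rewrite !ffunE.
by case=> /addIr eq1 /addIr eq2; rewrite [r1 i]surjective_pairing eq1 eq2 -surjective_pairing.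
Qed.

Lemma enc_mask_shift d r j i :
  enc_mask W (shift_rnd d r) j i = enc_mask W r j i + row i (share_shift *m vec_mx (d j)).
Proof.
rewrite !enc_maskE // ffunE /= !raddfB !raddfD /= mulmxA mulmxBl.
by rewrite [in RHS]raddfB /= raddfN addrACA [- _ + _]addrC.
Qed.

Lemma masked_shift (x x' : models_t F U N T m) r :
  masked x' (shift_rnd (fun i => x' i - x i) r) =1 masked x r.
Proof. by move=> i; rewrite /masked ffunE /= opprB addrCA [x' i + _]addrC subrK addrC. Qed.

Lemma agg_share_shift (U1 : {set 'I_N}) d r :
  \sum_(i in U1) d i = 0 -> agg_share W U1 (shift_rnd d r) =1 agg_share W U1 r.
Proof.
move=> sum_d0 i; rewrite /agg_share.
under eq_bigr do rewrite enc_mask_shift.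
by rewrite big_split /= -!raddf_sum /= sum_d0 !raddf0 addr0.
Qed.

Lemma lsa_privacy_codom (R : realType) (Px : models_t F U N T m -> R)
    (Tc U1 : {set 'I_N}) :
  {subset Tc <= codom f} ->
  cond_mutual_info (lsa_prob Px) (@all_models F U N T m) (server_view W U1)
    (fun w => (sum_models U1 w, colluders_view W Tc w)) = 0.
Proof.
move=> Tc_f; rewrite /lsa_prob /all_models.
apply: cond_mutual_info_fst_eq0 => x x' r r' [sum_eq /ffunP view_eq].
pose d i := x' i - x i.
have d_col i : i \in Tc -> d i = 0.
  by move=> iTc; move: (view_eq i); rewrite !ffunE iTc /d => -[-> _ _]; rewrite subrr.
have sum_d0 : \sum_(i in U1) d i = 0.
  by rewrite sumrB; move: sum_eq; rewrite /sum_models /= => ->; rewrite subrr.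
exists (shift_rnd d); first exact: shift_rnd_inj.
move=> s; split.
  congr (_, _); apply/ffunP => i; rewrite !ffunE; first by rewrite masked_shift.
  by rewrite agg_share_shift.
congr (_, _); first exact: sum_eq.
apply/ffunP => i; rewrite !ffunE; case: ifP => // iTc.
congr (Some (_, _, _)) => /=.
- by apply/esym/eqP; rewrite -subr_eq0 -/(d i) d_col.
- by rewrite d_col // subr0 raddf0 mulmx0 addr0 -surjective_pairing.
- by apply/ffunP => j; rewrite !ffunE enc_mask_shift row_share_shift_codom ?addr0 ?Tc_f.
Qed.

End Privacy.

Lemma lsa_privacy : (T <= U)%N -> (T <= N)%N -> MDS B -> privacy_guarantee T m W T.
Proof.
(* The vanishing holds for any weight function [Px], not only for laws. *)
move=> leTU leTN mdsB R Px _ _ Tc U1 leTc.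
have leT : (#|Tc| <= T <= #|'I_N|)%N by rewrite leTc card_ord.
have [S TcS cardS] := exists_supset_card leT.
have [f injf S_f] := enum_ord_set cardS.
apply: (lsa_privacy_codom leTU (mdsB f injf)) => i /(subsetP TcS).
by rewrite S_f.
Qed.

Definition coef_mx (zn : vec * 'M[F]_(T, m)) : 'M[F]_(U, m) := \matrix_(k < U) coef zn k.

Lemma agg_share_coef_mx U1 (r : rnd) j :
  agg_share W U1 r j = row j (W^T *m \sum_(i in U1) coef_mx (r i)).
Proof.
rewrite mulmx_sumr raddf_sum; apply: eq_bigr => i _ /=.
by rewrite row_trmx_mul; apply: eq_bigr => k _; rewrite rowK.
Qed.

Lemma MDS_rows_mul_inj (S : {set 'I_N}) (A A' : 'M[F]_(U, m)) : MDS W -> #|S| = U ->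
  {in S, forall j, row j (W^T *m A) = row j (W^T *m A')} -> A = A'.
Proof.
move=> mdsW cardS eqAA'; have [f injf S_f] := enum_ord_set cardS.
have Wf_unit : (colsub f W)^T \in unitmx by rewrite unitmx_tr mdsW.
apply: (can_inj (mulKmx Wf_unit)); apply/row_matrixP => b.
by rewrite trmx_mxsub !mul_rowsub_mx !row_rowsub; apply: eqAA'; rewrite S_f codom_f.
Qed.

Lemma top_rows_sum_coef_mx (U1 : {set 'I_N}) (r : rnd) :
  \matrix_(k < U - T) row (widen_ord (leq_subr T U) k) (\sum_(i in U1) coef_mx (r i))
  = \sum_(i in U1) vec_mx (r i).1.
Proof.
apply/row_matrixP => k; rewrite rowK !raddf_sum; apply: eq_bigr => i _.
by rewrite /= rowK /coef (ltn_ord k) (nrow_ord _ k).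
Qed.

Lemma server_output_correct (U1 S : {set 'I_N}) (x : models_t F U N T m) (r : rnd) :
  MDS W -> #|S| = U ->
  server_output W U1 S (masked x r) (agg_share W U1 r) = \sum_(i in U1) x i.
Proof.
move=> mdsW cardS; rewrite /server_output; case: pickP => [A /forallP solA | nosol].
  have -> : A = \sum_(i in U1) coef_mx (r i).
    apply: (MDS_rows_mul_inj mdsW cardS) => j jS.
    by rewrite -agg_share_coef_mx row_trmx_mul; apply/eqP; exact: (implyP (solA j) jS).
  rewrite top_rows_sum_coef_mx -(raddf_sum vec_mx) vec_mxK.
  by rewrite /masked big_split /= addrK.
have /negbT/negP[] := nosol (\sum_(i in U1) coef_mx (r i)).
by apply/forallP => j; apply/implyP => _; rewrite agg_share_coef_mx row_trmx_mul.
Qed.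

Lemma lsa_dropout D : (U <= N - D)%N -> MDS W -> dropout_guarantee T m W D.
Proof.
move=> leUND mdsW x r U1 U2 _ _ leU2; split => [|S _ cardS].
  exact: leq_trans leUND leU2.
exact: server_output_correct.
Qed.

End LightSecAggProofs.

Theorem theorem1 (F : finFieldType) (N T D U m : nat) (W : 'M[F]_(U, N)) :
  (1 <= N)%N -> (T + D < N)%N -> (T < U)%N -> (U <= N - D)%N ->
  T_private_MDS T W ->
  privacy_guarantee T m W T /\ dropout_guarantee T m W D.
Proof.
move=> _ ltTDN ltTU leUND [mdsW mdsB]; split.
  by apply: lsa_privacy mdsB; lia.
exact: lsa_dropout.
Qed.
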